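(* Let $K$ be a field of characteristic $p>3$, let $n\ge1$, let $O_n=K[x_1,\dots,x_n]/(x_1^p,\dots,x_n^p)$, let $W_n=\operatorname{Der}(O_n)$, let $D$ be a Lie subalgebra of $W_n$ such that $O_n$ has no $D$-invariant ideals other than $0$ and $O_n$, and let $S$ be a finite-dimensional simple Lie algebra over $K$. Consider the Lie algebra $(S\otimes O_n)\oplus D$ with brackets $[x\otimes f,y\otimes g]=[x,y]\otimes fg$, $[d,x\otimes f]=x\otimes d(f)$, and the bracket of $D$, for $x,y\in S$, $f,g\in O_n$, $d\in D$. Then $Z^2_{comm}((S\otimes O_n)\oplus D)\cong Z^2_{comm}(D)$.
   Context: For a Lie algebra $\mathfrak L$ over $K$, $Z^2_{comm}(\mathfrak L)$ denotes the vector space of commutative $2$-cocycles, i.e. symmetric bilinear forms $\varphi:\mathfrak L\times\mathfrak L\to K$ with $\varphi([x,y],z)+\varphi([z,x],y)+\varphi([y,z],x)=0$ for all $x,y,z\in\mathfrak L$. *)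

From HB Require Import structures.
From mathcomp Require Import all_boot all_order all_algebra.
Set Implicit Arguments. Unset Strict Implicit. Unset Printing Implicit Defensive.
Import GRing.Theory.
Local Open Scope ring_scope.

(* Monomials x_1^{a_1}...x_n^{a_n} with 0 <= a_i < p : exponent vectors. *)
Definition mon (n p : nat) := {ffun 'I_n -> 'I_p}.

(* O_n = K[x_1..x_n]/(x_1^p..x_n^p), as coefficient functions on monomials. *)
Definition On (K : fieldType) (n p : nat) := {ffun mon n p -> K^o}.

Section Defs.
Variables (K : fieldType) (n p : nat).
Local Notation O := (On K n p).
Local Notation M := (mon n p).

(* a + b = m componentwise (as natural numbers); x^a x^b = x^(a+b) if all
   exponents stay < p, and 0 otherwise (since x_i^p = 0). *)
Definition addmon (a b m : M) : bool := [forall i, ((a i : nat) + b i == m i)%N].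

Definition omul (f g : O) : O :=
  [ffun m => \sum_(a : M) \sum_(b : M | addmon a b m) f a * g b].

Definition xmon (a : M) : O := [ffun m => (m == a)%:R].

(* d is a derivation of O_n (d is K-linear since d : 'End(O)). *)
Definition is_derivation (d : 'End(O)) : Prop :=
  forall f g : O, d (omul f g) = omul (d f) g + omul f (d g).

Definition is_ideal (I : {vspace O}) : Prop :=
  forall f g : O, g \in I -> omul f g \in I.

Definition D_simple (D : {vspace 'End(O)}) : Prop :=
  forall I : {vspace O}, is_ideal I ->
    (forall d : 'End(O), d \in D -> forall g : O, g \in I -> d g \in I) ->
    I = 0%VS \/ I = fullv.

Definition Dbr (D : {vspace 'End(O)}) (d e : subvs_of D) : subvs_of D :=
  vsproj D ((vsval d \o vsval e)%VF - (vsval e \o vsval d)%VF).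

(* Elements of S (x) O_n are written sum_a u(a) (x) x^a, i.e. functions u : M -> S. *)
Definition cur_br (S : vectType K) (brS : S -> S -> S) (u v : {ffun M -> S})
  : {ffun M -> S} :=
  [ffun m => \sum_(a : M) \sum_(b : M | addmon a b m) brS (u a) (v b)].

Definition der_act (S : vectType K) (d : 'End(O)) (u : {ffun M -> S})
  : {ffun M -> S} :=
  [ffun m => \sum_(a : M) (d (xmon a)) m *: u a].

Definition Ltype (S : vectType K) (D : {vspace 'End(O)}) :=
  ({ffun M -> S} * subvs_of D)%type.

Definition Lbr (S : vectType K) (brS : S -> S -> S) (D : {vspace 'End(O)})
  (x y : Ltype S D) : Ltype S D :=
  (cur_br brS x.1 y.1 + der_act (vsval x.2) y.1 - der_act (vsval y.2) x.1,
   Dbr x.2 y.2).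

End Defs.

Section Lie.
Variable K : fieldType.

Definition is_lie_bracket (V : lmodType K) (br : V -> V -> V) : Prop :=
  [/\ forall (a : K) x y z, br (a *: x + y) z = a *: br x z + br y z,
      forall (a : K) x y z, br z (a *: x + y) = a *: br z x + br z y,
      forall x, br x x = 0 &
      forall x y z, br x (br y z) + br y (br z x) + br z (br x y) = 0].

Definition is_lie_ideal (V : vectType K) (br : V -> V -> V) (I : {vspace V}) : Prop :=
  forall x y : V, y \in I -> br x y \in I.

Definition simple_lie (V : vectType K) (br : V -> V -> V) : Prop :=
  [/\ is_lie_bracket br,
      exists x y : V, br x y != 0 &
      forall I : {vspace V}, is_lie_ideal br I -> I = 0%VS \/ I = fullv].

Definition Z2comm (V : lmodType K) (br : V -> V -> V) (phi : V -> V -> K) : Prop :=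
  [/\ forall (a : K) x y z, phi (a *: x + y) z = a * phi x z + phi y z,
      forall (a : K) x y z, phi z (a *: x + y) = a * phi z x + phi z y,
      forall x y, phi x y = phi y x &
      forall x y z, phi (br x y) z + phi (br z x) y + phi (br y z) x = 0].

Definition iso_form_spaces (V W : lmodType K)
  (A : (V -> V -> K) -> Prop) (B : (W -> W -> K) -> Prop) : Prop :=
  exists (T : (V -> V -> K) -> (W -> W -> K)) (T' : (W -> W -> K) -> (V -> V -> K)),
    [/\ forall phi, A phi -> B (T phi),
        forall psi, B psi -> A (T' psi),
        forall (a : K) phi1 phi2, A phi1 -> A phi2 ->
          T (fun x y => a * phi1 x y + phi2 x y) = (fun x y => a * T phi1 x y + T phi2 x y),
        forall phi, A phi -> T' (T phi) = phi &
        forall psi, B psi -> T (T' psi) = psi].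

End Lie.

From HB Require Import structures.
From mathcomp Require Import all_boot all_order all_algebra.
From mathcomp Require Import ring.
From Stdlib Require Import FunctionalExtensionality.
Import GRing.Theory.
Local Open Scope ring_scope.
Set Implicit Arguments. Unset Strict Implicit. Unset Printing Implicit Defensive.

(* A commutative 2-cocycle [phi] of [L = (S (x) O_n) (+) D] vanishes as soon as one
   argument lies in [S (x) O_n], so restriction to [D] is the isomorphism.
   On pure tensors, the cocycle identity inside the current algebra together with
   [[S, S] = S] gives [phi(s (x) f, t (x) g) = beta_(s,t)(f g)] for a family of
   linear forms [beta_(s,t)] on [O_n].  Testing the cocycle identity against
   [d] in [D] yields [phi(s (x) f, d) = 0] and, as [2 != 0], [beta_(s,t)(d(f) g) = 0].
   The [d(f) g] span a [D]-invariant ideal of [O_n]; it is nonzero, for otherwise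
   [D] would kill [O_n] and the augmentation ideal would be [D]-invariant.  By
   [D]-simplicity it is all of [O_n], hence [beta = 0]. *)

Section LieBracket.
Variables (K : fieldType) (V : lmodType K) (br : V -> V -> V).
Hypothesis br_lie : is_lie_bracket br.

Fact lie_bracket_linear z : linear (br z).
Proof. by case: br_lie => _ lin _ _ a x y; apply: lin. Qed.

HB.instance Definition _ z := GRing.isLinear.Build K V V _ (br z) (lie_bracket_linear z).

Lemma lie_brDl x y z : br (x + y) z = br x z + br y z.
Proof. by case: br_lie => lin _ _ _; rewrite -(scale1r x) lin !scale1r. Qed.

Lemma lie_anti x y : br y x = - br x y.
Proof.
case: br_lie => _ _ alt _; apply/eqP; rewrite -addr_eq0 addrC.
by have := alt (x + y); rewrite lie_brDl !linearD /= !alt add0r addr0 => ->.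
Qed.

Lemma lie_brZl a x z : br (a *: x) z = a *: br x z.
Proof. by rewrite lie_anti linearZ /= -scalerN -lie_anti. Qed.

Lemma lie_jacobi_cyclic x y z :
  br (br x y) z + br (br y z) x + br (br z x) y = 0.
Proof.
case: br_lie => _ _ _ jacobi.
rewrite (lie_anti z (br x y)) (lie_anti x (br y z)) (lie_anti y (br z x)).
by rewrite -!opprD -addrA addrC jacobi oppr0.
Qed.

Lemma lie_leibniz x y z : br x (br y z) - br y (br x z) = br (br x y) z.
Proof.
have := lie_jacobi_cyclic x y z.
rewrite (lie_anti x (br y z)) (lie_anti y (br z x)) (lie_anti x z) linearN /=.
rewrite opprK => E; apply/eqP; rewrite eq_sym -subr_eq0 opprB addrA addrAC.
by rewrite E.
Qed.

End LieBracket.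

Section SimpleLieAlgebra.
Variables (K : fieldType) (S : vectType K) (br : S -> S -> S).
Hypothesis S_simple : simple_lie br.

Lemma simple_lie_bracket : is_lie_bracket br.
Proof. by case: S_simple. Qed.

HB.instance Definition _ z :=
  GRing.isLinear.Build K S S _ (br z) (lie_bracket_linear simple_lie_bracket z).

Definition basis_brackets : seq S :=
  [seq br u v | u <- vbasis fullv, v <- vbasis fullv].

Lemma mem_basis_brackets_span u v : br u v \in <<basis_brackets>>%VS.
Proof.
rewrite (coord_vbasis (memvf u)) (lie_anti simple_lie_bracket) linear_sum /=.
rewrite memvN; apply: memv_suml => i _; rewrite linearZ /=; apply: memvZ.
rewrite (lie_anti simple_lie_bracket) memvN (coord_vbasis (memvf v)) linear_sum.
apply: memv_suml => j _; rewrite linearZ /=; apply: memvZ; apply: memv_span.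
by apply: allpairs_f; rewrite mem_nth // size_tuple.
Qed.

(* [S, S] is a nonzero ideal, hence all of S. *)
Lemma simple_lie_perfect : <<basis_brackets>>%VS = fullv.
Proof.
case: S_simple => _ [x [y br_neq0]] ideal_trivial.
have [span0|//] := ideal_trivial _ (fun u v _ => mem_basis_brackets_span u v).
by move: (mem_basis_brackets_span x y); rewrite span0 memv0 (negbTE br_neq0).
Qed.

Section LinearFunctional.
Variable c : S -> K.
Hypothesis c_linear : forall a x y, c (a *: x + y) = a * c x + c y.

Fact functional_is_linear : linear (c : S -> K^o).
Proof. by move=> a x y; apply: c_linear. Qed.

HB.instance Definition _ := GRing.isLinear.Build K S K^o _ c functional_is_linear.

Lemma simple_lie_functional_eq0 : (forall u v, c (br u v) = 0) -> forall x, c x = 0.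
Proof.
move=> c_br0 x; have : x \in <<in_tuple basis_brackets>>%VS.
  by rewrite simple_lie_perfect memvf.
move/coord_span ->; rewrite linear_sum big1 // => i _; rewrite linearZ /=.
have : (in_tuple basis_brackets)`_i \in basis_brackets by rewrite mem_nth // size_tuple.
by case/allpairsP => [[u v] [_ _ ->]]; rewrite c_br0 scaler0.
Qed.

End LinearFunctional.
End SimpleLieAlgebra.

Section CommutativeCocycle.
Variables (K : fieldType) (V : lmodType K) (br : V -> V -> V) (phi : V -> V -> K).
Hypothesis phi_cocycle : Z2comm br phi.

Lemma Z2comm_sym x y : phi x y = phi y x.
Proof. by case: phi_cocycle. Qed.

Lemma Z2comm_linearr a x y z : phi z (a *: x + y) = a * phi z x + phi z y.
Proof. by case: phi_cocycle. Qed.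

Fact Z2comm_linear z : linear (phi z : V -> K^o).
Proof. by move=> a x y; apply: Z2comm_linearr. Qed.

Lemma Z2comm_cyclic x y z : phi (br x y) z + phi (br z x) y + phi (br y z) x = 0.
Proof. by case: phi_cocycle. Qed.

Lemma Z2comm_comp (W : lmodType K) (brW : W -> W -> W) (f : W -> V) :
  linear f -> {morph f : x y / brW x y >-> br x y} ->
  Z2comm brW (fun x y => phi (f x) (f y)).
Proof.
move=> f_lin f_br; case: phi_cocycle => linl linr sym cyc.
by split=> [a x y z|a x y z|x y|x y z]; rewrite ?f_lin ?f_br.
Qed.

HB.instance Definition _ z :=
  GRing.isLinear.Build K V K^o _ (phi z) (Z2comm_linear z).

Section OnLieSubset.
Variable X : V -> Prop.
Hypothesis X_br : forall a b, X a -> X b -> X (br a b).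
Hypothesis X_anti : forall a b, X a -> X b -> br b a = - br a b.
Hypothesis X_leibniz : forall a b c, X a -> X b -> X c ->
  br a (br b c) - br b (br a c) = br (br a b) c.
Hypothesis X_jacobi : forall a b c, X a -> X b -> X c ->
  br (br a b) c + br (br b c) a + br (br c a) b = 0.
Hypothesis two_neq0 : (2%:R : K) != 0.

Lemma Z2comm_brl a b w : X a -> X b -> X w ->
  phi (br a b) w = phi b (br a w) - phi a (br b w).
Proof.
move=> Xa Xb Xw; have := Z2comm_cyclic a b w.
rewrite (X_anti Xa Xw) (Z2comm_sym (- _)) linearN /= (Z2comm_sym (br b w)) => E.
by apply/eqP; rewrite -subr_eq0 -E; apply/eqP; ring.
Qed.

(* Apply [phi _ w] to the Jacobi identity of [x, y, z] and expand each term with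
   [Z2comm_brl]: by the Leibniz rule the result is twice the claimed sum. *)
Lemma Z2comm_double_bracket x y z w : X x -> X y -> X z -> X w ->
  phi z (br (br x y) w) + phi x (br (br y z) w) + phi y (br (br z x) w) = 0.
Proof.
move=> Xx Xy Xz Xw.
have := congr1 (phi^~ w) (X_jacobi Xx Xy Xz).
rewrite /= !(Z2comm_sym _ w) !linearD /= linear0 !(Z2comm_sym w).
rewrite (Z2comm_brl (X_br Xx Xy) Xz Xw) (Z2comm_brl (X_br Xy Xz) Xx Xw).
rewrite (Z2comm_brl (X_br Xz Xx) Xy Xw) (Z2comm_brl Xx Xy (X_br Xz Xw)).
rewrite (Z2comm_brl Xy Xz (X_br Xx Xw)) (Z2comm_brl Xz Xx (X_br Xy Xw)).
rewrite -(X_leibniz Xy Xz Xw) -(X_leibniz Xz Xx Xw) -(X_leibniz Xx Xy Xw) !linearB /=.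
by move=> E; apply: (mulfI two_neq0); rewrite mulr0 -E; ring.
Qed.

End OnLieSubset.
End CommutativeCocycle.

Section TruncatedPolynomials.
Variables (K : fieldType) (n p : nat).
Local Notation O := (On K n p).
Local Notation M := (mon n p).

Lemma omulE (f g : O) m :
  omul f g m = \sum_(a : M) \sum_(b : M | addmon a b m) f a * g b.
Proof. by rewrite ffunE. Qed.

Lemma addmonC (a b m : M) : addmon a b m = addmon b a m.
Proof. by apply/eq_forallb => i; rewrite addnC. Qed.

Lemma addmon_inj (a b m m' : M) : addmon a b m -> addmon a b m' -> m = m'.
Proof.
move=> /forallP E /forallP E'; apply/ffunP => i; apply: ord_inj.
by rewrite -(eqP (E i)) -(eqP (E' i)).
Qed.

Lemma omulC (f g : O) : omul f g = omul g f.
Proof.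
apply/ffunP => m; rewrite !omulE.
rewrite (eq_bigr (fun a => \sum_b (if addmon a b m then f a * g b else 0)));
  last by move=> a _; rewrite big_mkcond.
rewrite exchange_big /=; apply: eq_bigr => b _; rewrite [RHS]big_mkcond /=.
by apply: eq_bigr => a _; rewrite addmonC mulrC.
Qed.

Fact omul_is_linear (f : O) : linear (omul f).
Proof.
move=> a g h; apply/ffunP => m; rewrite !ffunE scaler_sumr -big_split /=.
apply: eq_bigr => x _; rewrite scaler_sumr -big_split /=.
by apply: eq_bigr => y _; rewrite !ffunE mulrDr mulrCA.
Qed.

HB.instance Definition _ (f : O) :=
  GRing.isLinear.Build K O O _ (omul f) (omul_is_linear f).

Lemma omulZl a (f h : O) : omul (a *: f) h = a *: omul f h.
Proof. by rewrite !(omulC _ h) linearZ. Qed.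

Lemma omul_suml I (r : seq I) (P : pred I) (F : I -> O) h :
  omul (\sum_(i <- r | P i) F i) h = \sum_(i <- r | P i) omul (F i) h.
Proof. by rewrite omulC linear_sum; apply: eq_bigr => i _; rewrite omulC. Qed.

Definition addmon3 (a b c m : M) : bool :=
  [forall i, ((a i : nat) + b i + c i == m i)%N].

Lemma sum_pred1 (P : pred M) (x : K) :
  (forall a a', P a -> P a' -> a = a') ->
  \sum_(a : M) (if P a then x else 0) = if [exists a, P a] then x else 0.
Proof.
move=> P_uniq; case: existsP => [[a0 Pa0]|nP].
  rewrite (bigD1 a0) //= Pa0 big1 ?addr0 // => a a_neq.
  by case: ifP => // Pa; rewrite (P_uniq _ _ Pa Pa0) eqxx in a_neq.
by rewrite big1 // => a _; case: ifP => // Pa; case: nP; exists a.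
Qed.

Lemma addmon3_split_l (a b c m : M) :
  [exists e, addmon a b e && addmon e c m] = addmon3 a b c m.
Proof.
apply/existsP/forallP.
  by case=> e /andP[/forallP ab_e /forallP ec_m] i; rewrite (eqP (ab_e i)) ec_m.
move=> abc_m.
have lt i : (a i + b i < p)%N.
  by rewrite (leq_ltn_trans _ (ltn_ord (m i))) // -(eqP (abc_m i)) leq_addr.
by exists [ffun i => Ordinal (lt i)]; apply/andP; split; apply/forallP => i;
  rewrite ffunE /=.
Qed.

Lemma omul_omulE (f g h : O) m :
  omul (omul f g) h m = \sum_(a : M) \sum_(b : M) \sum_(c : M)
    (if addmon3 a b c m then f a * g b * h c else 0).
Proof.
rewrite omulE (eq_bigr (fun e => \sum_c \sum_a \sum_b
    (if addmon a b e && addmon e c m then f a * g b * h c else 0))); last first.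
  move=> e _; rewrite big_mkcond; apply: eq_bigr => c _.
  rewrite omulE mulr_suml; case: ifP => _; last first.
    by rewrite big1 // => a _; rewrite big1 // => b _; rewrite andbF.
  apply: eq_bigr => a _; rewrite big_mkcond mulr_suml; apply: eq_bigr => b _.
  by rewrite andbT; case: ifP; rewrite ?mul0r.
rewrite exchange_big /= (eq_bigr (fun c => \sum_a \sum_b \sum_e
    (if addmon a b e && addmon e c m then f a * g b * h c else 0))); last first.
  by move=> c _; rewrite exchange_big; apply: eq_bigr => a _; rewrite exchange_big.
rewrite exchange_big; apply: eq_bigr => a _; rewrite exchange_big.
apply: eq_bigr => b _; apply: eq_bigr => c _.
rewrite sum_pred1 ?addmon3_split_l // => e e' /andP[He _] /andP[He' _].
exact: addmon_inj He He'.
Qed.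

Lemma omulA (f g h : O) : omul (omul f g) h = omul f (omul g h).
Proof.
apply/ffunP => m; rewrite omul_omulE omulC omul_omulE.
rewrite exchange_big; apply: eq_bigr => a _; rewrite exchange_big /=.
apply: eq_bigr => c _; apply: eq_bigr => b _.
have -> : addmon3 a c b m = addmon3 b a c m.
  by apply/eq_forallb => i; rewrite addnAC (addnC (a i : nat)).
by rewrite [g a * h c * f b]mulrC mulrA.
Qed.

Lemma xmon_decomp (f : O) : f = \sum_(a : M) f a *: xmon K a.
Proof.
apply/ffunP => m; rewrite sum_ffunE (bigD1 m) //= big1 ?addr0.
  by rewrite !ffunE eqxx mulr1n [RHS]mulr1.
by move=> a /negbTE a_neq; rewrite !ffunE eq_sym a_neq scaler0.
Qed.

Lemma lfun_xmon_decomp (d : 'End(O)) f : d f = \sum_(a : M) f a *: d (xmon K a).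
Proof.
by rewrite {1}(xmon_decomp f) linear_sum; apply: eq_bigr => a _; rewrite linearZ.
Qed.

Variable p_gt0 : (0 < p)%N.

Definition mon0 : M := [ffun _ => Ordinal p_gt0].
Definition oone : O := xmon K mon0.

Lemma addmon0l (b m : M) : addmon mon0 b m = (b == m).
Proof.
apply/forallP/eqP => [E|-> i]; last by rewrite ffunE.
by apply/ffunP => i; apply: ord_inj; move/eqP: (E i); rewrite ffunE.
Qed.

Lemma omul1 (f : O) : omul oone f = f.
Proof.
apply/ffunP => m; rewrite omulE (bigD1 mon0) //= [X in _ + X]big1 ?addr0; last first.
  by move=> a /negbTE a_neq; rewrite big1 // => b _; rewrite ffunE a_neq mul0r.
rewrite (bigD1 m) ?addmon0l //= [X in _ + X]big1 ?addr0 ?ffunE ?eqxx ?mul1r //.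
by move=> b /andP[]; rewrite addmon0l => ->.
Qed.

Lemma omul1r (f : O) : omul f oone = f.
Proof. by rewrite omulC omul1. Qed.

Lemma derivation_oone (d : 'End(O)) : is_derivation d -> d oone = 0.
Proof.
move=> d_der; have := d_der oone oone; rewrite !omul1 omul1r -{1}[d oone]addr0.
by move/addrI/esym.
Qed.

Lemma addmon_eq0 (a b : M) : addmon a b mon0 = (a == mon0) && (b == mon0).
Proof.
apply/forallP/andP => [E|[/eqP -> /eqP -> i]]; last by rewrite !ffunE.
by split; apply/eqP/ffunP => i; apply: ord_inj; move/eqP: (E i); rewrite !ffunE /=;
  case: (a i : nat) => //; case: (b i : nat).
Qed.

Lemma omul_mon0 (f g : O) : omul f g mon0 = f mon0 * g mon0.
Proof.
rewrite omulE (bigD1 mon0) //= [X in _ + X]big1 ?addr0; last first.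
  by move=> a /negbTE a_neq; rewrite big1 // => b; rewrite addmon_eq0 a_neq.
rewrite (bigD1 mon0) ?addmon_eq0 ?eqxx //= [X in _ + X]big1 ?addr0 //.
by move=> b /andP[]; rewrite addmon_eq0 eqxx /= => /eqP ->; rewrite eqxx.
Qed.

End TruncatedPolynomials.

Section AugmentationIdeal.
Variables (K : fieldType) (n p : nat).
Hypotheses (p_gt1 : (1 < p)%N) (n_gt0 : (0 < n)%N).
Local Notation O := (On K n p).
Local Notation M := (mon n p).
Let p_gt0 : (0 < p)%N := ltnW p_gt1.
Local Notation mon0 := (mon0 n p_gt0).

Definition aug_ideal : {vspace O} :=
  <<[seq xmon K a | a <- enum M & a != mon0]>>%VS.

Lemma mem_aug_ideal g : (g \in aug_ideal) = (g mon0 == 0).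
Proof.
set X := [seq xmon K a | a <- enum M & a != mon0].
apply/idP/idP => [g_in|/eqP g0].
  rewrite (coord_span (X := in_tuple X) g_in) sum_ffunE; apply/eqP/big1 => i _.
  have : (in_tuple X)`_i \in X by rewrite mem_nth // size_tuple.
  case/mapP => a; rewrite mem_filter => /andP[a_neq _] ->.
  by rewrite !ffunE eq_sym (negbTE a_neq) scaler0.
rewrite (xmon_decomp g); apply: memv_suml => a _.
have [->|a_neq] := eqVneq a mon0; first by rewrite g0 scale0r mem0v.
by apply/memvZ/memv_span/map_f; rewrite mem_filter a_neq mem_enum.
Qed.

Lemma aug_ideal_is_ideal : is_ideal aug_ideal.
Proof. by move=> f g; rewrite !mem_aug_ideal omul_mon0 => /eqP ->; rewrite mulr0. Qed.

(* The augmentation ideal is a proper nonzero ideal, invariant under any [D]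
   acting by zero. *)
Lemma D_simple_acts_nontrivially (D : {vspace 'End(O)}) :
  D_simple D -> ~ (forall d f, d \in D -> d f = 0).
Proof.
move=> D_simp D0.
have invariant d : d \in D -> forall g, g \in aug_ideal -> d g \in aug_ideal.
  by move=> d_in g _; rewrite D0 // mem0v.
pose a1 : M := [ffun _ => Ordinal p_gt1].
have [aug0|augT] := D_simp _ aug_ideal_is_ideal invariant.
  have : xmon K a1 \in aug_ideal.
    rewrite mem_aug_ideal ffunE; suff -> : (mon0 == a1) = false by [].
    by apply/eqP => /ffunP/(_ (Ordinal n_gt0)); rewrite !ffunE => /(congr1 val).
  by rewrite aug0 memv0 => /eqP/ffunP/(_ a1); rewrite !ffunE eqxx => /eqP; rewrite oner_eq0.
have : oone K n p_gt0 \in aug_ideal by rewrite augT memvf.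
by rewrite mem_aug_ideal ffunE eqxx oner_eq0.
Qed.

End AugmentationIdeal.

Section DerivationIdeal.
Variables (K : fieldType) (n p : nat) (D : {vspace 'End(On K n p)}).
Hypothesis D_der : forall d, d \in D -> is_derivation d.
Local Notation O := (On K n p).
Local Notation M := (mon n p).

(* The ideal generated by [D(O_n)]: spanned by the [d(x^a) x^b], [d] in a basis of [D]. *)
Definition der_ideal : {vspace O} :=
  <<[seq omul (d (xmon K ab.1)) (xmon K ab.2) | d : 'End(O) <- vbasis D,
       ab <- [seq (a, b) | a <- enum M, b <- enum M]]>>%VS.

Lemma mem_der_ideal d f g : d \in D -> omul (d f) g \in der_ideal.
Proof.
move=> d_in; rewrite (coord_vbasis d_in) sum_lfunE omul_suml.
apply: memv_suml => i _; rewrite lfunE omulZl; apply: memvZ.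
rewrite /= lfun_xmon_decomp (xmon_decomp g) omul_suml; apply: memv_suml => a _.
rewrite omulZl linear_sum /=; apply/memvZ/memv_suml => b _.
rewrite linearZ; apply/memvZ/memv_span/allpairsP.
exists ((vbasis D)`_i, (a, b)); split; rewrite ?mem_nth ?size_tuple //.
by apply/allpairsP; exists (a, b); rewrite !mem_enum.
Qed.

Lemma der_ideal_min (U : {vspace O}) :
  (forall d f g, d \in D -> omul (d f) g \in U) -> (der_ideal <= U)%VS.
Proof.
move=> gensU; apply/span_subvP => _ /allpairsP[[d [a b]] [d_in _ ->]].
exact/gensU/vbasis_mem.
Qed.

Lemma der_ideal_is_ideal : is_ideal der_ideal.
Proof.
move=> f g g_in.
have /subvP sub : (der_ideal <= linfun (omul f) @^-1: der_ideal)%VS.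
  apply: der_ideal_min => d h k d_in; rewrite -memv_preim lfunE /= omulC omulA.
  exact: mem_der_ideal.
by move: (sub g g_in); rewrite -memv_preim lfunE.
Qed.

Lemma der_ideal_invariant d : d \in D -> forall g, g \in der_ideal -> d g \in der_ideal.
Proof.
move=> d_in; have /subvP sub : (der_ideal <= d @^-1: der_ideal)%VS.
  apply: der_ideal_min => e h k e_in; rewrite -memv_preim D_der //.
  by apply: memvD; [apply: mem_der_ideal | rewrite omulC; apply: mem_der_ideal].
by move=> g /sub; rewrite -memv_preim.
Qed.

Lemma der_ideal_full : D_simple D -> (1 < p)%N -> (0 < n)%N -> der_ideal = fullv.
Proof.
move=> D_simp p_gt1 n_gt0.
case: (D_simp _ der_ideal_is_ideal der_ideal_invariant) => // der_ideal0.
case: (D_simple_acts_nontrivially p_gt1 n_gt0 D_simp) => d f d_in.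
have := mem_der_ideal f (oone K n (ltnW p_gt1)) d_in.
by rewrite der_ideal0 memv0 omul1r => /eqP.
Qed.

End DerivationIdeal.

Section CurrentAlgebra.
Variables (K : fieldType) (n p : nat) (S : vectType K) (brS : S -> S -> S)
  (D : {vspace 'End(On K n p)}).
Hypothesis brS_lie : is_lie_bracket brS.
Local Notation O := (On K n p).
Local Notation M := (mon n p).
Local Notation L := (Ltype S D).
Local Notation brL := (@Lbr K n p S brS D).

HB.instance Definition _ z :=
  GRing.isLinear.Build K S S _ (brS z) (lie_bracket_linear brS_lie z).

Definition tensor (s : S) (f : O) : L := ([ffun a => f a *: s], 0).
Definition der_elt (d : subvs_of D) : L := (0, d).

Fact tensor_is_linear s : linear (tensor s).
Proof.
move=> a f g; congr pair; last by rewrite /= scaler0 addr0.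
by apply/ffunP => m; rewrite !ffunE scalerDl scalerA.
Qed.

HB.instance Definition _ s := GRing.isLinear.Build K O L _ (tensor s) (tensor_is_linear s).

Lemma tensor_linearl f a s t : tensor (a *: s + t) f = a *: tensor s f + tensor t f.
Proof.
congr pair; last by rewrite /= scaler0 addr0.
by apply/ffunP => m; rewrite !ffunE scalerDr !scalerA mulrC.
Qed.

Lemma tensor0l f : tensor 0 f = 0.
Proof. by congr pair; apply/ffunP => m; rewrite !ffunE scaler0. Qed.

Lemma tensorDl f s t : tensor (s + t) f = tensor s f + tensor t f.
Proof. by rewrite -(scale1r s) tensor_linearl !scale1r. Qed.

Lemma tensorNl f s : tensor (- s) f = - tensor s f.
Proof. by rewrite -scaleN1r -(addr0 (_ *: s)) tensor_linearl tensor0l addr0 scaleN1r. Qed.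

Lemma tensorBl f s t : tensor (s - t) f = tensor s f - tensor t f.
Proof. by rewrite tensorDl tensorNl. Qed.

Fact der_elt_is_linear : linear der_elt.
Proof. by move=> a d e; congr pair; rewrite /= ?scaler0 ?addr0. Qed.

Lemma der_act_tensor (d : 'End(O)) s f : der_act d (tensor s f).1 = (tensor s (d f)).1.
Proof.
apply/ffunP => m; rewrite !ffunE lfun_xmon_decomp sum_ffunE scaler_suml.
by apply: eq_bigr => a _; rewrite !ffunE scalerA mulrC.
Qed.

Lemma der_act0 (d : 'End(O)) : der_act d (0 : {ffun M -> S}) = 0.
Proof. by apply/ffunP => m; rewrite !ffunE big1 // => a _; rewrite ffunE scaler0. Qed.

Lemma der_act0l (u : {ffun M -> S}) : der_act 0 u = 0.
Proof. by apply/ffunP => m; rewrite !ffunE big1 // => a _; rewrite lfunE ffunE scale0r. Qed.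

Lemma cur_br0l (u : {ffun M -> S}) : cur_br brS 0 u = 0.
Proof.
apply/ffunP => m; rewrite !ffunE big1 // => a _; rewrite big1 // => b _.
by rewrite ffunE (lie_anti brS_lie) linear0 oppr0.
Qed.

Lemma cur_br0r (u : {ffun M -> S}) : cur_br brS u 0 = 0.
Proof.
by apply/ffunP => m; rewrite !ffunE big1 // => a _; rewrite big1 // => b _; rewrite ffunE linear0.
Qed.

Lemma Dbr0l (d : subvs_of D) : Dbr 0 d = 0.
Proof. by rewrite /Dbr linear0 comp_lfun0r comp_lfun0l subr0 linear0. Qed.

Lemma Dbr0r (d : subvs_of D) : Dbr d 0 = 0.
Proof. by rewrite /Dbr linear0 comp_lfun0r comp_lfun0l subr0 linear0. Qed.

Lemma Lbr_tensor s t f g : brL (tensor s f) (tensor t g) = tensor (brS s t) (omul f g).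
Proof.
rewrite /Lbr /= Dbr0r !der_act0l subr0 addr0; congr pair.
apply/ffunP => m; rewrite !ffunE scaler_suml; apply: eq_bigr => a _.
rewrite scaler_suml; apply: eq_bigr => b _; rewrite !ffunE.
by rewrite (lie_brZl brS_lie) linearZ /= scalerA mulrC.
Qed.

Lemma Lbr_der_tensor d s f : brL (der_elt d) (tensor s f) = tensor s (vsval d f).
Proof. by rewrite /Lbr /= Dbr0r cur_br0l der_act_tensor der_act0l subr0 add0r. Qed.

Lemma Lbr_tensor_der d s f : brL (tensor s f) (der_elt d) = tensor s (- vsval d f).
Proof.
rewrite /Lbr /= Dbr0l cur_br0r der_act_tensor der_act0l add0r sub0r linearN /=.
by congr pair; rewrite oppr0.
Qed.

Lemma Lbr_der d e : brL (der_elt d) (der_elt e) = der_elt (Dbr d e).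
Proof. by rewrite /Lbr /= cur_br0l !der_act0 subr0 addr0. Qed.

Lemma Ltype_decomp (x : L) :
  x = \sum_(a : M) tensor (x.1 a) (xmon K a) + der_elt x.2.
Proof.
case: x => u d /=.
have -> : \sum_(a : M) tensor (u a) (xmon K a) =
          (\sum_(a : M) [ffun m => xmon K a m *: u a], 0).
  by elim/big_rec2: _ => // a y1 y2 _ ->; congr pair; rewrite addr0.
congr pair; rewrite /= ?add0r // addr0; apply/ffunP => m.
rewrite sum_ffunE (bigD1 m) //= big1 ?addr0 => [|a /negbTE a_neq];
  by rewrite !ffunE ?eqxx ?scale1r // eq_sym a_neq scale0r.
Qed.

End CurrentAlgebra.

Lemma sum_and_diff_eq0 (K : fieldType) (x y : K) :
  (2%:R : K) != 0 -> x + y = 0 -> - x + y = 0 -> x = 0 /\ y = 0.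
Proof.
move=> two_neq0 sum0 diff0.
have : (x + y) + (- x + y) = 2%:R * y by rewrite addrACA subrr add0r mulr_natl mulr2n.
rewrite sum0 diff0 addr0 => /esym/eqP; rewrite mulf_eq0 (negbTE two_neq0) => /eqP y0.
by split=> //; move: sum0; rewrite y0 addr0.
Qed.

Section CocycleOnL.
Variables (K : fieldType) (n p : nat) (S : vectType K) (brS : S -> S -> S)
  (D : {vspace 'End(On K n p)}).
Hypotheses (S_simple : simple_lie brS) (two_neq0 : (2%:R : K) != 0) (p_gt0 : (0 < p)%N).
Hypothesis D_der : forall d, d \in D -> is_derivation d.
Variable phi : Ltype S D -> Ltype S D -> K.
Hypothesis phi_cocycle : Z2comm (@Lbr K n p S brS D) phi.

Local Notation O := (On K n p).
Local Notation L := (Ltype S D).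
Local Notation brL := (@Lbr K n p S brS D).
Local Notation tensor := (@tensor K n p S D).
Local Notation der_elt := (@der_elt K n p S D).
Local Notation oone := (oone K n p_gt0).
Let brS_lie := simple_lie_bracket S_simple.

HB.instance Definition _ z := GRing.isLinear.Build K S S _ (brS z) (lie_bracket_linear brS_lie z).
HB.instance Definition _ z := GRing.isLinear.Build K L K^o _ (phi z) (Z2comm_linear phi_cocycle z).

Definition is_tensor (x : L) := exists s f, x = tensor s f.

Lemma is_tensor_br x y : is_tensor x -> is_tensor y -> is_tensor (brL x y).
Proof. by move=> [s [f ->]] [t [g ->]]; exists (brS s t), (omul f g); rewrite Lbr_tensor. Qed.

Lemma is_tensor_anti x y : is_tensor x -> is_tensor y -> brL y x = - brL x y.
Proof.
move=> [s [f ->]] [t [g ->]]; rewrite !Lbr_tensor //.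
by rewrite omulC (lie_anti brS_lie) tensorNl.
Qed.

Lemma is_tensor_leibniz x y z : is_tensor x -> is_tensor y -> is_tensor z ->
  brL x (brL y z) - brL y (brL x z) = brL (brL x y) z.
Proof.
move=> [s [f ->]] [t [g ->]] [u [h ->]]; rewrite !Lbr_tensor //.
by rewrite -!omulA (omulC g f) -tensorBl lie_leibniz.
Qed.

Lemma is_tensor_jacobi x y z : is_tensor x -> is_tensor y -> is_tensor z ->
  brL (brL x y) z + brL (brL y z) x + brL (brL z x) y = 0.
Proof.
move=> [s [f ->]] [t [g ->]] [u [h ->]]; rewrite !Lbr_tensor //.
rewrite [omul (omul g h) f]omulC [omul (omul h f) g]omulA [omul h (omul f g)]omulC.
by rewrite !omulA -!tensorDl lie_jacobi_cyclic // tensor0l.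
Qed.

Lemma tensor_is_tensor s f : is_tensor (tensor s f).
Proof. by exists s, f. Qed.

Let double_bracket s f t g u h v k :=
  Z2comm_double_bracket phi_cocycle is_tensor_br is_tensor_anti is_tensor_leibniz
    is_tensor_jacobi two_neq0 (tensor_is_tensor s f) (tensor_is_tensor t g)
    (tensor_is_tensor u h) (tensor_is_tensor v k).

Lemma phi_tensor_mul_double_bracket s t u v g h :
  phi (tensor t g) (tensor (brS (brS u s) v) h) =
  phi (tensor t oone) (tensor (brS (brS u s) v) (omul g h)).
Proof.
have := double_bracket s oone t g u oone v h.
have := double_bracket s oone t oone u oone v (omul g h).
by rewrite !Lbr_tensor // !omul1 !omul1r => <- /addrI.
Qed.

(* Both sides are linear in [w] and agree for [w = [[u, s], v]]; since [S] is
   perfect, such elements span [S]. *)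
Lemma phi_tensor_mul t w g h :
  phi (tensor t g) (tensor w h) = phi (tensor t oone) (tensor w (omul g h)).
Proof.
apply/eqP; rewrite -subr_eq0; apply/eqP; move: w.
pose c w := phi (tensor t g) (tensor w h) - phi (tensor t oone) (tensor w (omul g h)).
have c_lin a x y : c (a *: x + y) = a * c x + c y.
  by rewrite /c !tensor_linearl !(Z2comm_linearr phi_cocycle); ring.
apply: (simple_lie_functional_eq0 S_simple c_lin) => x v.
have cbr_lin a y z : c (brS (a *: y + z) v) = a * c (brS y v) + c (brS z v).
  by case: brS_lie => lin _ _ _; rewrite lin c_lin.
move: x; apply: (simple_lie_functional_eq0 S_simple cbr_lin) => u s.
by rewrite /c phi_tensor_mul_double_bracket subrr.
Qed.

Definition tensor_form s t k := phi (tensor s oone) (tensor t k).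

Fact tensor_form_is_linear s t : linear (tensor_form s t : O -> K^o).
Proof. by move=> a k k'; rewrite /tensor_form tensor_is_linear (Z2comm_linearr phi_cocycle). Qed.

HB.instance Definition _ s t :=
  GRing.isLinear.Build K O K^o _ (tensor_form s t) (tensor_form_is_linear s t).

Lemma phi_tensor s t f g : phi (tensor s f) (tensor t g) = tensor_form s t (omul f g).
Proof. exact: phi_tensor_mul. Qed.

Lemma tensor_form_sym s t k : tensor_form s t k = tensor_form t s k.
Proof. by rewrite {1}/tensor_form (Z2comm_sym phi_cocycle) phi_tensor omul1r. Qed.

Lemma cocycle_tensor_der s t f g d :
  phi (tensor (brS s t) (omul f g)) (der_elt d) +
  (tensor_form s t (omul (vsval d f) g) - tensor_form s t (omul (vsval d g) f)) = 0.
Proof.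
have := Z2comm_cyclic phi_cocycle (tensor s f) (tensor t g) (der_elt d).
rewrite Lbr_tensor // Lbr_der_tensor // Lbr_tensor_der // !phi_tensor.
by rewrite (tensor_form_sym t) [omul (- _) _]omulC !linearN /= [omul f (vsval d g)]omulC addrA.
Qed.

Lemma tensor_form_der_swap s t f g (d : subvs_of D) :
  tensor_form s t (omul (vsval d f) g) = tensor_form s t (omul (vsval d g) f).
Proof.
have E := cocycle_tensor_der t s f g d.
rewrite (lie_anti brS_lie) tensorNl (Z2comm_sym phi_cocycle (- _)) linearN /= in E.
rewrite (Z2comm_sym phi_cocycle (der_elt d)) !(tensor_form_sym t) in E.
have [_ /eqP] := sum_and_diff_eq0 two_neq0 (cocycle_tensor_der s t f g d) E.
by rewrite subr_eq0 => /eqP.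
Qed.

Lemma tensor_form_der s t (d : subvs_of D) k : tensor_form s t (vsval d k) = 0.
Proof.
rewrite -[vsval d k]omul1r tensor_form_der_swap.
by rewrite (derivation_oone _ (D_der (subvsP d))) omulC !linear0.
Qed.

(* [d(f) g + d(g) f = d(f g)] is killed by [tensor_form s t], and the two summands
   agree: so each vanishes as [2 != 0]. *)
Lemma tensor_form_der_mul s t (d : subvs_of D) f g :
  tensor_form s t (omul (vsval d f) g) = 0.
Proof.
have := tensor_form_der s t d (omul f g).
rewrite (D_der (subvsP d)) linearD /= [omul f _]omulC -tensor_form_der_swap.
by rewrite -mulr2n -mulr_natl => /eqP; rewrite mulf_eq0 (negbTE two_neq0) => /eqP.
Qed.

Lemma phi_tensor_der s f (d : subvs_of D) : phi (tensor s f) (der_elt d) = 0.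
Proof.
move: s; apply: (simple_lie_functional_eq0 S_simple) => [a x y|s t].
  by rewrite tensor_linearl (Z2comm_sym phi_cocycle) (Z2comm_linearr phi_cocycle)
    !(Z2comm_sym phi_cocycle (der_elt d)).
have := cocycle_tensor_der s t f oone d.
by rewrite omul1r tensor_form_der_swap subrr addr0.
Qed.

Hypotheses (D_simp : D_simple D) (p_gt1 : (1 < p)%N) (n_gt0 : (0 < n)%N).

Lemma tensor_form_eq0 s t k : tensor_form s t k = 0.
Proof.
have /subvP sub : (der_ideal D <= lker (linfun (tensor_form s t : O -> K^o)))%VS.
  apply: der_ideal_min => d f g d_in.
  by rewrite memv_ker lfunE /= -(vsprojK d_in) tensor_form_der_mul.
have := sub k; rewrite der_ideal_full // memvf memv_ker lfunE => /(_ isT).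
by move/eqP.
Qed.

Lemma phi_tensorl s f y : phi (tensor s f) y = 0.
Proof.
rewrite (Ltype_decomp y) linearD linear_sum /= phi_tensor_der addr0.
by rewrite big1 // => a _; rewrite phi_tensor tensor_form_eq0.
Qed.

Lemma Z2comm_der_part x y : phi x y = phi (der_elt x.2) (der_elt y.2).
Proof.
have phi_der_l u v : phi u v = phi (der_elt u.2) v.
  rewrite {1}(Ltype_decomp u) (Z2comm_sym phi_cocycle) linearD linear_sum /=.
  by rewrite big1 ?add0r => [|a _]; rewrite (Z2comm_sym phi_cocycle) ?phi_tensorl.
by rewrite phi_der_l (Z2comm_sym phi_cocycle) phi_der_l (Z2comm_sym phi_cocycle).
Qed.

End CocycleOnL.

Theorem theorem6p1 (K : fieldType) (p n : nat) (S : vectType K)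
  (brS : S -> S -> S) (D : {vspace 'End(On K n p)}) :
  p \in [pchar K] -> (3 < p)%N -> (0 < n)%N ->
  simple_lie brS ->
  (forall d, d \in D -> is_derivation d) ->
  (forall d e, d \in D -> e \in D -> ((d \o e)%VF - (e \o d)%VF) \in D) ->
  D_simple D ->
  iso_form_spaces (Z2comm (@Lbr K n p S brS D)) (Z2comm (@Dbr K n p D)).
Proof.
move=> p_char p_gt3 n_gt0 S_simple D_der _ D_simp.
have p_gt1 : (1 < p)%N by apply: ltn_trans p_gt3.
have two_neq0 : (2%:R : K) != 0.
  by rewrite -(dvdn_pcharf p_char) gtnNdvd // (ltn_trans _ p_gt3).
have brS_lie := simple_lie_bracket S_simple.
exists (fun phi d e => phi (der_elt S d) (der_elt S e)), (fun psi x y => psi x.2 y.2).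
split=> [phi phi_cocycle|psi psi_cocycle|//|phi phi_cocycle|//].
- apply: (Z2comm_comp phi_cocycle) => [|x y]; first exact: der_elt_is_linear.
  by rewrite Lbr_der.
- exact: (Z2comm_comp psi_cocycle).
- apply: functional_extensionality => x; apply: functional_extensionality => y.
  by rewrite [RHS](Z2comm_der_part S_simple two_neq0 (ltnW p_gt1) D_der phi_cocycle).
Qed.
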